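(* In any execution of \textsf{Murmur} (described in the context), if $\rho$ and $\pi$ are correct processes and $\rho$ is in $\pi$'s gossip sample, then $\pi$ is eventually in $\rho$'s gossip sample.
   Context: System model: a fixed set $\Pi$ of processes, some Byzantine and the rest correct, communicating asynchronously over reliable authenticated point-to-point links (every message between correct processes is eventually delivered after a finite delay); signatures cannot be forged. \textsf{Murmur} (parameter $G$): upon initialization each correct process samples $\bar G$ from a Poisson distribution with mean $G$, chooses $\bar G$ distinct processes uniformly at random as its initial gossip sample, and sends a GossipSubscribe message to each of them. A correct process modifies its gossip sample only at initialization and upon receiving a GossipSubscribe message from a process $\pi$, in which case it adds $\pi$ to its gossip sample (and, if it has already delivered a message, sends it a Gossip message carrying the delivered message and signature). Upon first obtaining a correctly signed message (by broadcasting it, for the sender, or by receiving a Gossip message with a valid sender signature), a correct process records it as delivered, forwards it in a Gossip message to every process in its gossip sample, and delivers it. *)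

From mathcomp Require Import all_boot.
Set Implicit Arguments. Unset Strict Implicit. Unset Printing Implicit Defensive.

(* Messages of Murmur: GossipSubscribe, and Gossip carrying the broadcast
   payload of type M together with the sender's signature of type Sg. *)
Inductive murmur_msg (M Sg : Type) : Type :=
| GossipSubscribe : murmur_msg M Sg
| Gossip : M -> Sg -> murmur_msg M Sg.
Arguments GossipSubscribe {M Sg}.
Arguments Gossip {M Sg}.

(* An execution in discrete global time t = 0, 1, 2, ...  Step t leads from
   the state at time t to the state at time t+1.  Initialization of every
   correct process takes place at time 0 (step 0).
   - [sample t p]    : gossip sample of p at time t;
   - [delivered t p] : the (message, signature) p has delivered by time t, if any;
   - [bcast t p]     : p broadcasts this (message, signature) during step t;
   - [sent t p q m]  : p sends m to q during step t;
   - [recv t p q m]  : p receives m from q during step t.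
   Only correct processes are constrained; Byzantine behaviour is arbitrary. *)
Record murmur_execution (P : finType) (correct : pred P) (M Sg : Type)
    (sender : P) (valid : M -> Sg -> bool) := MurmurExec {
  sample : nat -> P -> {set P};
  delivered : nat -> P -> option (M * Sg);
  bcast : nat -> P -> option (M * Sg);
  sent : nat -> P -> P -> murmur_msg M Sg -> Prop;
  recv : nat -> P -> P -> murmur_msg M Sg -> Prop;

  bcast_ok : forall t p x, correct p -> bcast t p = Some x ->
    p = sender /\ valid x.1 x.2;

  sample_step : forall t p q, correct p ->
    (q \in sample t.+1 p) <-> (q \in sample t p \/ recv t p q GossipSubscribe);

  delivered_init : forall p, correct p -> delivered 0 p = None;
  delivered_keep : forall t p x, correct p ->
    delivered t p = Some x -> delivered t.+1 p = Some x;
  delivered_new : forall t p x, correct p -> delivered t p = None ->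
    delivered t.+1 p = Some x ->
    valid x.1 x.2 /\ (bcast t p = Some x \/ exists q, recv t p q (Gossip x.1 x.2));
  delivered_must : forall t p, correct p -> delivered t p = None ->
    (bcast t p <> None \/ exists q x, valid x.1 x.2 /\ recv t p q (Gossip x.1 x.2)) ->
    delivered t.+1 p <> None;

  sent_spec : forall t p q m, correct p ->
    sent t p q m <->
    ((m = GossipSubscribe /\ t = 0 /\ q \in sample 0 p)
     \/ exists x : M * Sg, m = Gossip x.1 x.2 /\
          ((delivered t p = None /\ delivered t.+1 p = Some x /\ q \in sample t.+1 p)
           \/ (delivered t p = Some x /\ recv t p q GossipSubscribe)));

  reliable : forall t p q m, correct p -> correct q -> sent t p q m ->
    exists t', t < t' /\ recv t' q p m;
  authentic : forall t p q m, correct q -> recv t p q m ->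
    exists t', t' < t /\ sent t' q p m
}.

(* Gossip samples only grow.  If rho is in pi's sample, it entered it either
   at initialization, and then pi's initial GossipSubscribe reliably reaches
   rho, which adds pi; or upon a GossipSubscribe from rho, which by
   authenticity rho sent, and a correct process only sends GossipSubscribe at
   initialization to its initial sample, so pi was in rho's sample from the
   start. *)
From mathcomp Require Import all_boot.

Set Implicit Arguments.
Unset Strict Implicit.
Unset Printing Implicit Defensive.

Section MurmurSamples.

Variables (P : finType) (correct : pred P) (M Sg : Type) (sender : P)
  (valid : M -> Sg -> bool) (E : murmur_execution correct sender valid).

Lemma sample_mono p q t1 t2 : correct p -> t1 <= t2 ->
  q \in sample E t1 p -> q \in sample E t2 p.
Proof.
move=> cp /subnK <-; elim: (t2 - t1) => [//|d IH] q_in.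
by rewrite addSn; apply/(sample_step E _ _ cp); left; apply: IH.
Qed.

Lemma sample_origin p q t : correct p -> q \in sample E t p ->
  q \in sample E 0 p \/ exists t0, t0 < t /\ recv E t0 p q GossipSubscribe.
Proof.
move=> cp; elim: t => [|t IH]; first by left.
case/(sample_step E _ _ cp) => [/IH [|[t0 [lt_t0t rcv]]]|rcv].
- by left.
- by right; exists t0; split=> //; apply: ltnW.
- by right; exists t.
Qed.

Lemma sent_subscribe_initial p q t : correct p ->
  sent E t p q GossipSubscribe -> q \in sample E 0 p.
Proof. by move=> cp /(sent_spec E _ _ _ cp) [[_ [_ q_in]] | [x [] //]]. Qed.

Lemma recv_subscribe_initial p q t : correct q ->
  recv E t p q GossipSubscribe -> p \in sample E 0 q.
Proof.
move=> cq /(authentic cq) [t' [_ snd]].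
exact: sent_subscribe_initial snd.
Qed.

Lemma initial_sample_subscribed p q : correct p -> correct q ->
  q \in sample E 0 p -> exists t, p \in sample E t q.
Proof.
move=> cp cq q_in.
have snd : sent E 0 p q GossipSubscribe by apply/(sent_spec E _ _ _ cp); left.
have [t [_ rcv]] := reliable cp cq snd.
by exists t.+1; apply/(sample_step E _ _ cq); right.
Qed.

End MurmurSamples.

Theorem lemma1 (P : finType) (correct : pred P) (M Sg : Type) (sender : P)
    (valid : M -> Sg -> bool)
    (E : murmur_execution correct sender valid) (rho pi : P) (t : nat) :
  correct rho -> correct pi -> rho \in sample E t pi ->
  exists t', t <= t' /\ pi \in sample E t' rho.
Proof.
move=> crho cpi /(sample_origin cpi) [rho_in | [t0 [_ rcv]]].
- have [t1 pi_in] := initial_sample_subscribed cpi crho rho_in.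
  exists (maxn t t1); split; first exact: leq_maxl.
  exact: sample_mono (leq_maxr t t1) pi_in.
- exists t; split=> //.
  exact: sample_mono (leq0n t) (recv_subscribe_initial crho rcv).
Qed.
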